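(* Let $G$ be an exceptional graph with root $r$, and let $\{x,y\}=V_2(G)\setminus\{r\}$. Then one of the following holds: (i) $x$ and $y$ are non-adjacent, have the same neighborhood (they are $2$-twins), and $L_G(x,y)\equiv\{1,2\}\pmod 3$; (ii) $x$ and $y$ are adjacent and $L_G(x,y)\equiv\{0,1\}\pmod 3$. Moreover, if $G\neq K_{2,3}$, then $\{0,2\}\subseteq L_{G-y}(r,x)\pmod 3$ and $\{0,2\}\subseteq L_{G-x}(r,y)\pmod 3$.
   Context: All graphs are finite and simple. $V_2(H)$ is the set of degree-$2$ vertices of $H$. For distinct vertices $u,w$ of a graph $H$, $L_H(u,w)$ is the set of lengths (numbers of edges) of all $(u,w)$-paths in $H$. For sets of integers $A,B$, $A\subseteq B\pmod k$ means every $a\in A$ is congruent mod $k$ to some $b\in B$, and $A\equiv B\pmod k$ means both $A\subseteq B\pmod k$ and $B\subseteq A\pmod k$. Exceptional graphs: let $r$ be a degree-$2$ vertex of $G$. $G$ is an exceptional graph with root $r$ if there is a sequence $(G_0,x_0,y_0),\ldots,(G_n,x_n,y_n)$, $n\ge 0$, with $G_0=K_{2,3}$, $G_n=G$, such that for each $i$ the vertices $r,x_i,y_i$ are distinct degree-$2$ vertices of $G_i$, and for each $i<n$: (1) if $x_iy_i\notin E(G_i)$, $G_{i+1}$ is obtained from $G_i$ by adding a new path of length $3$ joining $x_i$ and $y_i$; (2) if $x_iy_i\in E(G_i)$, $G_{i+1}$ is obtained from $G_i$ either by adding a new vertex $v$ with $N_{G_{i+1}}(v)=N_{G_i}(w)$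 for some $w\in\{x_i,y_i\}$, or by adding a new $4$-cycle $abcda$ and the edges $ax_i,cy_i$. (Every such graph has exactly three degree-$2$ vertices.) *)

(* Finite simple graphs are represented with vertices drawn
   from an ambient finType T: a vertex set [vs] and an edge set [es] of
   2-element subsets of [vs]. *)
From mathcomp Require Import all_boot.
Set Implicit Arguments. Unset Strict Implicit. Unset Printing Implicit Defensive.

Record graph (T : finType) := Graph { vs : {set T}; es : {set {set T}} }.

Section Graphs.
Variable T : finType.
Implicit Types (G : graph T) (u v w x y r : T).

Definition wf_graph G := forall e, e \in es G -> (#|e| == 2) && (e \subset vs G).

Definition adj G u v : bool := (u != v) && ([set u; v] \in es G).

Definition nbh G v : {set T} := [set u in vs G | adj G v u].

Definition deg G v : nat := #|nbh G v|.

Definition V2 G : {set T} := [set v in vs G | deg G v == 2].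

Definition del G v : graph T := Graph (vs G :\ v) [set e in es G | v \notin e].

(* s is the tail of a (u,w)-path u :: s in G: distinct vertices of G,
   consecutive ones adjacent, ending at w. Its length is size s. *)
Definition gpath G u w (s : seq T) : bool :=
  [&& path (adj G) u s, last u s == w, uniq (u :: s) & all (fun z => z \in vs G) (u :: s)].

Definition Lset G u w : nat -> Prop := fun n => exists s, gpath G u w s /\ size s = n.

Definition subset_mod (A B : nat -> Prop) (k : nat) : Prop :=
  forall a, A a -> exists b, B b /\ a = b %[mod k].
Definition equiv_mod (A B : nat -> Prop) (k : nat) : Prop :=
  subset_mod A B k /\ subset_mod B A k.

Definition natset (s : seq nat) : nat -> Prop := fun n => n \in s.

Definition isK23 G : Prop :=
  exists a1 a2 b1 b2 b3 : T,
    [/\ uniq [:: a1; a2; b1; b2; b3],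
        vs G = [set a1; a2; b1; b2; b3] &
        es G = [set [set a1; b1]; [set a1; b2]; [set a1; b3];
                    [set a2; b1]; [set a2; b2]; [set a2; b3]]].

(* One step G_i -> G_{i+1} of the construction, with r, x = x_i, y = y_i. *)
Definition ext_step r G x y G' : Prop :=
  [/\ uniq [:: r; x; y], r \in V2 G, x \in V2 G, y \in V2 G &
  (~~ adj G x y /\
     exists p q : T, [/\ uniq [:: p; q], p \notin vs G, q \notin vs G,
        vs G' = vs G :|: [set p; q] &
        es G' = es G :|: [set [set x; p]; [set p; q]; [set q; y]]])
  \/
  (adj G x y /\
     (
      (exists v w : T, [/\ v \notin vs G, w \in [:: x; y],
          vs G' = v |: vs G &
          es G' = es G :|: [set [set v; u] | u in nbh G w]])
      \/
      (exists a b c d : T, [/\ uniq [:: a; b; c; d],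
          [&& a \notin vs G, b \notin vs G, c \notin vs G & d \notin vs G],
          vs G' = vs G :|: [set a; b; c; d] &
          es G' = es G :|: [set [set a; b]; [set b; c]; [set c; d]; [set d; a];
                                [set a; x]; [set c; y]]])))].

(* exc r G : G = G_n for some sequence G_0 = K_{2,3}, ..., G_n built as above
   (the conditions for i < n are imposed by ext_step). *)
Inductive exc (r : T) : graph T -> Prop :=
| exc_base G : isK23 G -> r \in V2 G -> exc r G
| exc_step G x y G' : exc r G -> ext_step r G x y G' -> exc r G'.

(* exceptional graph with root r: also the condition for i = n *)
Definition exceptional G r : Prop :=
  exc r G /\ exists x y, uniq [:: r; x; y] /\ [/\ r \in V2 G, x \in V2 G & y \in V2 G].

End Graphs.

(* Induction along the construction sequence, with an invariant stronger than
   the statement: G has minimum degree 2, and both L_G(r,x) and L_G(r,y)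
   contain 1 and 2 mod 3.  In K_{2,3} all paths between degree-2 vertices have
   even length at most 4.  Each step attaches a gadget whose two new degree-2
   vertices can only be joined through it, so their paths are the old
   (x,y)-paths lengthened by 2, 1 or 4 edges (path of length 3, twin vertex,
   4-cycle), which moves the residues {1,2} and {0,1} into each other; paths
   from r to the new vertices are old (r,x)- and (r,y)-paths extended into the
   gadget. *)

From mathcomp Require Import all_boot zify.
Set Implicit Arguments. Unset Strict Implicit. Unset Printing Implicit Defensive.

Section GraphBasics.
Variable T : finType.
Implicit Types (G H : graph T) (u v w x y z : T) (s t : seq T).

Lemma set2_eqE a b c d :
  ([set a; b] == [set c; d] :> {set T}) = ((a == c) && (b == d)) || ((a == d) && (b == c)).
Proof.
apply/idP/idP; last by case/orP=> /andP[/eqP-> /eqP->] //; rewrite setUC.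
move/eqP=> E.
have : a \in [set c; d] by rewrite -E set21.
have : b \in [set c; d] by rewrite -E set22.
have : c \in [set a; b] by rewrite E set21.
have : d \in [set a; b] by rewrite E set22.
rewrite !inE; do 2!case/orP=> /eqP->; rewrite ?eqxx ?orbT ?andbT //=.
Qed.

Lemma set2_eq a b c d :
  [set a; b] = [set c; d] :> {set T} -> (a = c /\ b = d) \/ (a = d /\ b = c).
Proof. by move/eqP; rewrite set2_eqE => /orP[]/andP[/eqP-> /eqP->]; [left|right]. Qed.

Lemma cards2_mem_or (A : {set T}) a b c :
  #|A| = 2 -> a \in A -> b \in A -> c \in A -> b != c -> b = a \/ c = a.
Proof.
move/eqP/cards2P=> [d [e [_ ->]]]; rewrite !inE.
by do 3!case/orP=> /eqP->; rewrite ?eqxx //; auto.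
Qed.

Lemma mem_cons_rcons u z w t : (w \in u :: rcons t z) = (w == z) || (w \in u :: t).
Proof. by rewrite -rcons_cons mem_rcons in_cons. Qed.

Lemma adj_sym G u v : adj G u v = adj G v u.
Proof. by rewrite /adj eq_sym setUC. Qed.

Lemma adj_vs G u v : wf_graph G -> adj G u v -> (u \in vs G) && (v \in vs G).
Proof. by move=> wf /andP[_ /wf /andP[_ /subsetP s]]; rewrite !s // !inE eqxx ?orbT. Qed.

Lemma adj_notin G u v : wf_graph G -> u \notin vs G -> adj G u v = false.
Proof. by move=> wf hu; apply/negbTE/negP=> /(adj_vs wf)/andP[h _]; rewrite h in hu. Qed.

Lemma adj_del G v a b : adj (del G v) a b = [&& adj G a b, v != a & v != b].
Proof.
rewrite /adj /= inE !inE negb_or.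
by case: (a != b); case: ([set a; b] \in es G); case: (v != a).
Qed.

Lemma gpath_nil G u w : gpath G u w [::] = (u == w) && (u \in vs G).
Proof. by rewrite /gpath /= andbT. Qed.

Lemma gpath_cons G u w z s :
  gpath G u w (z :: s) = [&& adj G u z, u \notin z :: s, u \in vs G & gpath G z w s].
Proof. rewrite /gpath /= -!andbA; do !bool_congr. Qed.

Lemma gpath_rcons G u w t z :
  gpath G u w (rcons t z) =
  [&& z == w, gpath G u (last u t) t, adj G (last u t) z, z \notin u :: t & z \in vs G].
Proof.
rewrite /gpath -!rcons_cons rcons_path last_rcons rcons_uniq all_rcons eqxx /= -!andbA.
do !bool_congr.
Qed.

Lemma gpath_last G u w s : gpath G u w s -> last u s = w.
Proof. by case/and4P=> _ /eqP. Qed.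

Lemma gpath_vs G u w s : gpath G u w s -> {subset u :: s <= vs G}.
Proof. by case/and4P=> _ _ _ /allP. Qed.

Lemma gpath_uniq G u w s : gpath G u w s -> uniq (u :: s).
Proof. by case/and4P. Qed.

Lemma gpath_notin G u w s n : gpath G u w s -> n \notin vs G -> n \notin u :: s.
Proof. by move=> h; apply: contra => /(gpath_vs h). Qed.

Lemma gpath_loop G u s : gpath G u u s -> s = [::].
Proof.
case: s => // z s h; have /andP[+ _] := gpath_uniq h.
by rewrite -{1}(gpath_last h) /= mem_last.
Qed.

Lemma rev_cons_belast u s : rev (u :: s) = last u s :: rev (belast u s).
Proof. by rewrite lastI rev_rcons. Qed.

Lemma gpath_rev G u w s : gpath G u w s -> gpath G w u (rev (belast u s)).
Proof.
move=> h; have /and4P[p _ un al] := h; have <- := gpath_last h.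
rewrite /gpath -rev_cons_belast rev_uniq un all_rev al andbT rev_path.
rewrite (eq_path (e' := adj G)) ?p => [|a b]; last exact: adj_sym.
by have := last_rcons u (rev s) u; rewrite -rev_cons rev_cons_belast /= => ->; rewrite eqxx.
Qed.

Lemma size_rev_belast u s : size (rev (belast u s)) = size s.
Proof. by rewrite size_rev size_belast. Qed.

Lemma gpath_rcons_adj G u w s z :
  gpath G u w s -> adj G w z -> z \notin u :: s -> z \in vs G -> gpath G u z (rcons s z).
Proof. by move=> h wz zs zv; rewrite gpath_rcons eqxx (gpath_last h) h wz zs zv. Qed.

Lemma gpath_cons_adj G u w s z :
  gpath G u w s -> adj G z u -> z \notin u :: s -> z \in vs G -> gpath G z w (u :: s).
Proof. by move=> h zu zs zv; rewrite gpath_cons zu zs zv h. Qed.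

Lemma gpath_restr G H u w s :
  gpath H u w s -> {subset u :: s <= vs G} ->
  {in vs G &, forall a b, adj H a b -> adj G a b} -> gpath G u w s.
Proof.
move=> /and4P[p l un _] sub hab; apply/and4P; split=> //; last exact/allP.
by apply: (sub_in_path (P := mem (vs G))) p; [exact: hab | exact/allP].
Qed.

Lemma gpath_del G v u w s : gpath (del G v) u w s = gpath G u w s && (v \notin u :: s).
Proof.
apply/idP/andP=> [h|[h nv]].
  have hv := gpath_vs h.
  have nv : v \notin u :: s by apply/negP=> /hv; rewrite !inE eqxx.
  split=> //; apply: gpath_restr h _ _ => [a /hv|a b _ _];
    by rewrite ?inE ?adj_del => /andP[].
have hv := gpath_vs h; apply: gpath_restr h _ _ => [a ha|a b].
  by rewrite !inE hv // andbT; apply: contraNneq nv => <-.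
by rewrite !inE adj_del => /andP[va _] /andP[vb _] ->; rewrite !(eq_sym v) va vb.
Qed.

End GraphBasics.

Section Subgraphs.
Variable T : finType.
Implicit Types (G H : graph T) (u v w x y z r : T) (s t : seq T).

Definition subgraph G H := (vs G \subset vs H) && (es G \subset es H).

Definition mindeg2 G := forall z, z \in vs G -> 1 < deg G z.

Lemma adj_sub G H u v : subgraph G H -> adj G u v -> adj H u v.
Proof. by case/andP=> _ /subsetP se; rewrite /adj => /andP[-> /se]. Qed.

Lemma gpath_sub G H u w s : subgraph G H -> gpath G u w s -> gpath H u w s.
Proof.
move=> sub /and4P[p l un al]; have /andP[/subsetP sv _] := sub.
apply/and4P; split=> //; last by apply/allP=> a /(allP al)/sv.
by apply: sub_path p => a b; apply: adj_sub.
Qed.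

Lemma subgraph_del G H v :
  wf_graph G -> subgraph G H -> v \notin vs G -> subgraph G (del H v).
Proof.
move=> wf /andP[/subsetP sv /subsetP se] nv; apply/andP; split; apply/subsetP=> a ha.
  by rewrite !inE sv // andbT; apply: contraNneq nv => <-.
rewrite inE se //=; apply: contra nv => va.
by have /wf/andP[_ /subsetP] := ha; apply.
Qed.

Lemma nbh_sub G H z : subgraph G H -> nbh G z \subset nbh H z.
Proof.
move=> sub; have /andP[/subsetP sv _] := sub.
by apply/subsetP=> a; rewrite !inE => /andP[/sv -> /(adj_sub sub)].
Qed.

Lemma deg_sub G H z : subgraph G H -> deg G z <= deg H z.
Proof. by move=> sub; apply/subset_leq_card/nbh_sub. Qed.

Lemma deg_sub_lt G H z n :
  subgraph G H -> n \notin vs G -> n \in nbh H z -> deg G z < deg H z.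
Proof.
move=> sub nv nH; have nG : n \notin nbh G z by rewrite inE (negbTE nv).
have : #|n |: nbh G z| <= deg H z.
  by apply/subset_leq_card; rewrite subUset sub1set nH nbh_sub.
by rewrite cardsU1 nG.
Qed.

Lemma nbh_set2 G z a b :
  (forall w, adj G z w -> w = a \/ w = b) -> adj G z a -> adj G z b ->
  a \in vs G -> b \in vs G -> nbh G z = [set a; b].
Proof.
move=> h za zb av bv; apply/setP=> w; rewrite !inE.
apply/andP/orP=> [[_ /h[]->]|[]/eqP->]; by rewrite ?eqxx; auto.
Qed.

Lemma deg_set2 G z a b : a != b -> nbh G z = [set a; b] -> deg G z = 2.
Proof. by move=> ab e; rewrite /deg e cards2 ab. Qed.

Lemma deg_ge3 G z a b c : uniq [:: a; b; c] ->
  a \in nbh G z -> b \in nbh G z -> c \in nbh G z -> 3 <= deg G z.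
Proof.
move=> un ha hb hc; have <- : #|[set a; b; c]| = 3.
  by rewrite -[3]/(size [:: a; b; c]) -(card_uniqP un); apply: eq_card => d; rewrite !inE orbA.
by apply: subset_leq_card; rewrite !subUset !sub1set ha hb hc.
Qed.

End Subgraphs.

Section Extension.
Variables (T : finType) (G G' : graph T) (N : {set T}) (E : {set {set T}}).
Hypotheses (ev : vs G' = vs G :|: N) (ee : es G' = es G :|: E)
  (Enew : forall e, e \in E -> ~~ (e \subset vs G)).

Lemma ext_subgraph : subgraph G G'.
Proof. by rewrite /subgraph ev ee !subsetUl. Qed.

Lemma ext_vs z : (z \in vs G') = (z \in vs G) || (z \in N).
Proof. by rewrite ev inE. Qed.

Lemma ext_adjE a b : adj G' a b = adj G a b || (a != b) && ([set a; b] \in E).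
Proof. by rewrite /adj ee in_setU; case: (a != b). Qed.

Lemma ext_adj_old : {in vs G &, forall a b, adj G' a b = adj G a b}.
Proof.
move=> a b ha hb; rewrite ext_adjE.
case: (boolP ([set a; b] \in E)) => [/Enew|]; last by rewrite andbF orbF.
by rewrite subUset !sub1set ha hb.
Qed.

Lemma ext_gpath_old u w s : gpath G' u w s -> {subset u :: s <= vs G} -> gpath G u w s.
Proof. by move=> h sub; apply: gpath_restr h sub _ => a b ha hb; rewrite ext_adj_old. Qed.

Lemma ext_adj_new a b :
  wf_graph G -> a \notin vs G -> adj G' a b = (a != b) && ([set a; b] \in E).
Proof. by move=> wf na; rewrite ext_adjE adj_notin. Qed.

Lemma ext_wf :
  wf_graph G -> (forall e, e \in E -> (#|e| == 2) && (e \subset vs G')) -> wf_graph G'.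
Proof.
move=> wf wfE e; rewrite ee in_setU => /orP[/wf/andP[-> sub]|/wfE //].
by rewrite (subset_trans sub) // ev subsetUl.
Qed.

Lemma ext_mindeg2 : mindeg2 G -> {in N, forall z, 1 < deg G' z} -> mindeg2 G'.
Proof.
move=> md mdN z; rewrite ext_vs => /orP[/md|/mdN //].
by move/leq_trans; apply; apply: deg_sub ext_subgraph.
Qed.

End Extension.

Section DegreeTwo.
Variable T : finType.
Implicit Types (G H : graph T) (x y z r p q : T).

Lemma V2P G z : reflect (z \in vs G /\ deg G z = 2) (z \in V2 G).
Proof. by rewrite inE; apply: (iffP andP) => -[-> /eqP]. Qed.

Lemma V2D1_set2 G r x y :
  V2 G :\ r = [set x; y] -> [/\ x \in V2 G, y \in V2 G, x != r & y != r].
Proof.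
move=> e; have : x \in V2 G :\ r by rewrite e set21.
have : y \in V2 G :\ r by rewrite e set22.
by rewrite !inE => /and3P[-> -> ->] /and3P[-> -> ->].
Qed.

Lemma V2D1_supergraph G G' r x y p q :
  subgraph G G' -> mindeg2 G -> V2 G :\ r = [set x; y] ->
  p \in V2 G' -> q \in V2 G' -> p != r -> q != r ->
  (forall z, z \in vs G' -> z \notin vs G -> deg G' z = 2 -> z \in [set p; q]) ->
  (forall z, z \in [set x; y] -> z \notin [set p; q] -> deg G z < deg G' z) ->
  V2 G' :\ r = [set p; q].
Proof.
move=> sub md e2 pV qV pr qr hnew hgrow; apply/setP=> z.
apply/setD1P/idP=> [[zr /V2P[zv dz]]|]; last by case/set2P=> ->; split.
have [zo|zn] := boolP (z \in vs G); last exact: hnew zv zn dz.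
have [zxy|nxy] := boolP (z \in [set x; y]).
  have /V2P[_ d2] : z \in V2 G by rewrite -e2 in zxy; case/setD1P: zxy.
  by case: (boolP (z \in [set p; q])) => // /(hgrow z zxy); rewrite d2 dz ltnn.
have : z \notin V2 G :\ r by rewrite e2.
rewrite !inE zr zo /= => /eqP d2; have := md z zo; have := deg_sub z sub; lia.
Qed.

End DegreeTwo.

Lemma modnD_mem_map (S : seq nat) d n m :
  n %% d \in S -> (n + m) %% d \in [seq (k + m) %% d | k <- S].
Proof. by move=> h; rewrite -modnDml; apply: map_f. Qed.

Section PathLengths.
Variable T : finType.
Implicit Types (G H : graph T) (u v w : T) (s : seq T).

Definition Lmod3_sub G u w (S : seq nat) := forall n, Lset G u w n -> n %% 3 \in S.

Definition Lmod3_has G u w k := exists2 n, Lset G u w n & n %% 3 = k.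

Lemma natset_subset_mod G u w (S : seq nat) :
  (forall k, k \in S -> Lmod3_has G u w k) -> subset_mod (natset S) (Lset G u w) 3.
Proof. by move=> h k /h[n Ln <-]; exists n; rewrite modn_mod. Qed.

Lemma natset_equiv_mod G u w (S : seq nat) :
  Lmod3_sub G u w S -> (forall k, k \in S -> Lmod3_has G u w k) ->
  equiv_mod (Lset G u w) (natset S) 3.
Proof.
move=> hS hk; split; last exact: natset_subset_mod.
by move=> n /hS Sn; exists (n %% 3); rewrite modn_mod.
Qed.

Lemma Lmod3_has_shift G H u w u' w' m k k' :
  (k + m) %% 3 = k' -> Lmod3_has G u w k ->
  (forall s, gpath G u w s -> exists2 s', gpath H u' w' s' & size s' = size s + m) ->
  Lmod3_has H u' w' k'.
Proof.
move=> <- [_ [s [hs <-]] <-] f; have [s' hs' e] := f s hs.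
by exists (size s'); [exists s' | rewrite e modnDml].
Qed.

Lemma Lmod3_has_transfer G H u w u' w' k :
  Lmod3_has G u w k ->
  (forall s, gpath G u w s -> exists2 s', gpath H u' w' s' & size s' = size s) ->
  Lmod3_has H u' w' k.
Proof.
move=> [_ [s [hs <-]] <-] f; have [s' hs' e] := f s hs.
by exists (size s'); [exists s' | rewrite e].
Qed.

Lemma Lmod3_has_sub G H u w k : subgraph G H -> Lmod3_has G u w k -> Lmod3_has H u w k.
Proof. by move=> sub /Lmod3_has_transfer; apply=> s hs; exists s; rewrite ?(gpath_sub sub). Qed.

Lemma Lmod3_has_del G v u w k : Lmod3_has (del G v) u w k -> Lmod3_has G u w k.
Proof.
by move/Lmod3_has_transfer; apply=> s; rewrite gpath_del => /andP[hs _]; exists s.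
Qed.

Lemma Lset_rev G u w n : Lset G u w n -> Lset G w u n.
Proof. by move=> [s [/gpath_rev h <-]]; exists (rev (belast u s)); rewrite size_rev_belast. Qed.

Lemma Lmod3_sub_rev G u w S : Lmod3_sub G u w S -> Lmod3_sub G w u S.
Proof. by move=> h n /Lset_rev /h. Qed.

Lemma Lmod3_has_rev G u w k : Lmod3_has G u w k -> Lmod3_has G w u k.
Proof. by move=> [n /Lset_rev Ln <-]; exists n. Qed.

Lemma gpath_rcons_new G H u w s n :
  subgraph G H -> n \notin vs G -> n \in vs H -> adj H w n ->
  gpath G u w s -> gpath H u n (rcons s n).
Proof.
move=> sub nG nH wn hs.
by apply: gpath_rcons_adj (gpath_sub sub hs) wn (gpath_notin hs nG) nH.
Qed.

Lemma Lmod3_has_rcons G H u w n k :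
  subgraph G H -> n \notin vs G -> n \in vs H -> adj H w n ->
  Lmod3_has G u w k -> Lmod3_has H u n (k.+1 %% 3).
Proof.
move=> sub nG nH wn hk; apply: (Lmod3_has_shift (m := 1)) hk _; first by rewrite addn1.
move=> s hs; exists (rcons s n); last by rewrite size_rcons addn1.
exact: gpath_rcons_new hs.
Qed.

Lemma Lmod3_has_rcons2 G H u w n n' k :
  subgraph G H -> n \notin vs G -> n' \notin vs G -> n != n' ->
  n \in vs H -> n' \in vs H -> adj H w n -> adj H n n' ->
  Lmod3_has G u w k -> Lmod3_has H u n' (k.+2 %% 3).
Proof.
move=> sub nG n'G nn' nH n'H wn nn'H hk.
apply: (Lmod3_has_shift (m := 2)) hk _; first by rewrite addn2.
move=> s hs; exists (rcons (rcons s n) n'); last by rewrite !size_rcons addn2.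
apply: gpath_rcons_adj (gpath_rcons_new sub nG nH wn hs) nn'H _ n'H.
by rewrite mem_cons_rcons negb_or eq_sym nn' (gpath_notin hs n'G).
Qed.

End PathLengths.

Section Invariant.
Variable T : finType.
Implicit Types (G : graph T) (r x y : T).

Definition twin_pair G x y :=
  [/\ ~~ adj G x y, nbh G x = nbh G y, Lmod3_sub G x y [:: 1; 2],
      Lmod3_has G x y 1 & Lmod3_has G x y 2].

Definition adjacent_pair G x y :=
  [/\ adj G x y, Lmod3_sub G x y [:: 0; 1], Lmod3_has G x y 0 & Lmod3_has G x y 1].

Definition root_reach r G x y :=
  [/\ Lmod3_has G r x 1, Lmod3_has G r x 2, Lmod3_has G r y 1 & Lmod3_has G r y 2].

Definition root_reach_avoid r G x y :=
  [/\ Lmod3_has (del G y) r x 0, Lmod3_has (del G y) r x 2,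
      Lmod3_has (del G x) r y 0 & Lmod3_has (del G x) r y 2].

(* K_{2,3} fails [root_reach_avoid]; the third clause supplies it at adjacent
   pairs, which is where steps (2) need it. *)
Definition exc_pair r G x y :=
  [/\ twin_pair G x y \/ adjacent_pair G x y, root_reach r G x y,
      adj G x y -> root_reach_avoid r G x y & isK23 G \/ root_reach_avoid r G x y].

Definition exc_inv r G :=
  [/\ wf_graph G, mindeg2 G &
      exists x y, [/\ x != y, V2 G :\ r = [set x; y] & exc_pair r G x y]].

Lemma exc_pair_sym r G x y : exc_pair r G x y -> exc_pair r G y x.
Proof.
have avoid_sym : root_reach_avoid r G x y -> root_reach_avoid r G y x by case.
case=> hA [? ? ? ?] hadj hK; split=> //.
- case: hA => [[nxy e sub h1 h2]|[axy sub h0 h1]]; [left|right].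
    by split; rewrite 1?adj_sym ?e //; [exact: Lmod3_sub_rev | exact: Lmod3_has_rev..].
  by split; rewrite 1?adj_sym //; [exact: Lmod3_sub_rev | exact: Lmod3_has_rev..].
- by rewrite adj_sym => /hadj /avoid_sym.
- by case: hK => [|/avoid_sym]; [left|right].
Qed.

Lemma exc_inv_pair r G x y :
  exc_inv r G -> x != y -> V2 G :\ r = [set x; y] -> exc_pair r G x y.
Proof.
case=> _ _ [p [q [_ -> hP]]] _ /set2_eq[[<- <-]|[<- <-]] //.
exact: exc_pair_sym.
Qed.

End Invariant.

Ltac neq_simpl :=
  rewrite ?eqxx; repeat match goal with
  | H : is_true (?a != ?b) |- context [?a == ?b] => rewrite (negbTE H)
  | H : is_true (?a != ?b) |- context [?b == ?a] => rewrite (eq_sym b a) (negbTE H)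
  end;
  rewrite ?andbF ?andFb ?orbF ?orFb ?andbT ?andTb ?orbT ?orTb.

Section PathStep.
Variables (T : finType) (r x y p q : T) (G G' : graph T).
Hypotheses (wf : wf_graph G) (md : mindeg2 G) (rV2 : r \in V2 G)
  (e2 : V2 G :\ r = [set x; y]) (hP : exc_pair r G x y)
  (nxy : ~~ adj G x y) (pq : p != q) (pG : p \notin vs G) (qG : q \notin vs G)
  (ev : vs G' = vs G :|: [set p; q])
  (ee : es G' = es G :|: [set [set x; p]; [set p; q]; [set q; y]]).

Let rv : r \in vs G. Proof. by case/V2P: rV2. Qed.
Let xv : x \in vs G. Proof. by case: (V2D1_set2 e2) => /V2P[]. Qed.
Let yv : y \in vs G. Proof. by case: (V2D1_set2 e2) => _ /V2P[]. Qed.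
Let rp : r != p := memPn pG r rv.
Let rq : r != q := memPn qG r rv.
Let xp : x != p := memPn pG x xv.
Let xq : x != q := memPn qG x xv.
Let yp : y != p := memPn pG y yv.
Let yq : y != q := memPn qG y yv.

Let sub : subgraph G G' := ext_subgraph ev ee.

Let pv : p \in vs G'. Proof. by rewrite ev !inE eqxx orbT. Qed.
Let qv : q \in vs G'. Proof. by rewrite ev !inE eqxx !orbT. Qed.

Lemma path3_xp : adj G' x p. Proof. by rewrite (ext_adjE ee) !inE xp eqxx !orbT. Qed.
Lemma path3_pq : adj G' p q. Proof. by rewrite (ext_adjE ee) !inE pq eqxx !orbT. Qed.
Lemma path3_qy : adj G' q y. Proof. by rewrite (ext_adjE ee) !inE eq_sym yq eqxx !orbT. Qed.

Lemma path3_adjp z : adj G' p z -> z = x \/ z = q.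
Proof.
rewrite (ext_adj_new ee _ wf) // !inE !set2_eqE; neq_simpl.
by case/andP=> _ /orP[]/eqP->; [left|right].
Qed.

Lemma path3_adjq z : adj G' q z -> z = p \/ z = y.
Proof.
rewrite (ext_adj_new ee _ wf) // !inE !set2_eqE; neq_simpl.
by case/andP=> _ /orP[]/eqP->; [left|right].
Qed.

Lemma path3_degp : deg G' p = 2.
Proof.
apply: deg_set2 xq _; apply: nbh_set2 path3_adjp _ path3_pq _ qv.
  by rewrite adj_sym path3_xp.
by rewrite ev inE xv.
Qed.

Lemma path3_degq : deg G' q = 2.
Proof.
apply: (deg_set2 (a := p) (b := y)); first by rewrite eq_sym.
apply: nbh_set2 path3_adjq _ path3_qy pv _; first by rewrite adj_sym path3_pq.
by rewrite ev inE yv.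
Qed.

Lemma path3_V2 : V2 G' :\ r = [set p; q].
Proof.
apply: V2D1_supergraph sub md e2 _ _ _ _ _ _; rewrite 1?eq_sym ?rp ?rq //.
- by apply/V2P; rewrite pv path3_degp.
- by apply/V2P; rewrite qv path3_degq.
- by move=> z; rewrite ev in_setU => /orP[->|].
move=> z /set2P[]-> _.
  by apply: deg_sub_lt sub pG _; rewrite inE pv path3_xp.
by apply: deg_sub_lt sub qG _; rewrite inE qv adj_sym path3_qy.
Qed.

Lemma path3_new e : e \in [set [set x; p]; [set p; q]; [set q; y]] -> ~~ (e \subset vs G).
Proof. by rewrite !inE -orbA => /or3P[]/eqP->; rewrite subUset !sub1set ?(negbTE pG) ?(negbTE qG) ?andbF. Qed.

Lemma path3_wf : wf_graph G'.
Proof.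
apply: ext_wf ev ee wf _ => e; rewrite !inE -orbA => /or3P[]/eqP->.
all: by rewrite cards2 subUset !sub1set ?pv ?qv ?ev ?inE; neq_simpl; rewrite ?xv ?yv.
Qed.

Lemma path3_mindeg2 : mindeg2 G'.
Proof. by apply: ext_mindeg2 ev ee md _ => z /set2P[]->; rewrite ?path3_degp ?path3_degq. Qed.

Lemma path3_sub : Lmod3_sub G' p q [:: 0; 1].
Proof.
have [[[_ _ sub12 _ _]|[axy _]] _ _ _] := hP; last by move: nxy; rewrite axy.
move=> _ [[|z s] [+ <-]]; first by rewrite gpath_nil (negbTE pq).
rewrite gpath_cons => /and4P[/path3_adjp[]-> + _ hs]; last by rewrite (gpath_loop hs).
case/lastP: s hs => [|t w]; first by rewrite gpath_nil (negbTE xq).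
rewrite gpath_rcons => /and5P[/eqP-> ht lq qt _] pt.
move: lq; rewrite adj_sym => /path3_adjq[] lt.
  by move: pt; rewrite -lt mem_cons_rcons mem_last orbT.
rewrite lt in ht.
have htG : gpath G x y t.
  apply: (ext_gpath_old ee path3_new ht) => a a_t.
  have := gpath_vs ht a_t; rewrite ev in_setU => /orP[//|/set2P[]] ea.
    by move: pt; rewrite -ea mem_cons_rcons a_t orbT.
  by move: qt; rewrite -ea a_t.
by rewrite /= size_rcons -addn2; apply: (modnD_mem_map (S := [:: 1; 2])) (sub12 _ (ex_intro _ t (conj htG erefl))).
Qed.

Lemma path3_reach : root_reach r G' p q.
Proof.
have [_ [x1 x2 y1 y2] _ _] := hP.
have yq' : adj G' y q by rewrite adj_sym path3_qy.
have qp' : adj G' q p by rewrite adj_sym path3_pq.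
split.
- by apply: (Lmod3_has_rcons2 sub qG pG _ qv pv yq' qp' y2); rewrite eq_sym.
- exact: (Lmod3_has_rcons sub pG pv path3_xp x1).
- exact: (Lmod3_has_rcons2 sub pG qG pq pv qv path3_xp path3_pq x2).
- exact: (Lmod3_has_rcons sub qG qv yq' y1).
Qed.

Lemma path3_avoid : root_reach_avoid r G' p q.
Proof.
have [_ [x1 x2 y1 y2] _ _] := hP.
have subq := subgraph_del wf sub qG; have subp := subgraph_del wf sub pG.
have yq' : adj G' y q by rewrite adj_sym path3_qy.
split; [apply: (Lmod3_has_rcons subq pG _ _ x2) | apply: (Lmod3_has_rcons subq pG _ _ x1)
       |apply: (Lmod3_has_rcons subp qG _ _ y2) | apply: (Lmod3_has_rcons subp qG _ _ y1)].
all: by rewrite ?inE ?adj_del ?pv ?qv ?path3_xp ?yq'; neq_simpl.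
Qed.

Lemma path3_exc_inv : exc_inv r G'.
Proof.
have [[[_ _ _ h1 _]|[axy _]] _ _ _] := hP; last by move: nxy; rewrite axy.
split; [exact: path3_wf | exact: path3_mindeg2 |].
exists p, q; split=> //; first exact: path3_V2.
split; [right | exact: path3_reach | by move=> _; exact: path3_avoid | right; exact: path3_avoid].
split; [exact: path3_pq | exact: path3_sub | |].
- apply: (Lmod3_has_shift (m := 2)) h1 _ => // s hs.
  exists (x :: rcons s q); last by rewrite /= size_rcons addn2.
  apply: gpath_cons_adj (gpath_rcons_new sub qG qv _ hs) _ _ pv.
  + by rewrite adj_sym path3_qy.
  + by rewrite adj_sym path3_xp.
  by rewrite mem_cons_rcons negb_or pq (gpath_notin hs pG).
- exists 1 => //; exists [:: q]; split=> //.
  by rewrite gpath_cons gpath_nil path3_pq !inE pq pv qv eqxx.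
Qed.

End PathStep.

Section TwinStep.
Variables (T : finType) (r x y v : T) (G G' : graph T).
Hypotheses (wf : wf_graph G) (md : mindeg2 G) (rV2 : r \in V2 G)
  (e2 : V2 G :\ r = [set x; y]) (hP : exc_pair r G x y) (axy : adj G x y)
  (vG : v \notin vs G) (ev : vs G' = v |: vs G)
  (ee : es G' = es G :|: [set [set v; u] | u in nbh G x]).

Let ev' : vs G' = vs G :|: [set v]. Proof. by rewrite ev setUC. Qed.
Let rv : r \in vs G. Proof. by case/V2P: rV2. Qed.
Let xV2 : x \in V2 G. Proof. by case: (V2D1_set2 e2). Qed.
Let xv : x \in vs G. Proof. by case/V2P: xV2. Qed.
Let yv : y \in vs G. Proof. by case: (V2D1_set2 e2) => _ /V2P[]. Qed.
Let xr : x != r. Proof. by case: (V2D1_set2 e2). Qed.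
Let vr : v != r := memPnC vG r rv.
Let xv' : x != v := memPn vG x xv.

Let sub : subgraph G G' := ext_subgraph ev' ee.

Let vv : v \in vs G'. Proof. by rewrite ev setU11. Qed.

Lemma twin_new e : e \in [set [set v; u] | u in nbh G x] -> ~~ (e \subset vs G).
Proof. by case/imsetP=> u _ ->; rewrite subUset sub1set (negbTE vG). Qed.

Lemma twin_adjv z : adj G' v z = (z \in nbh G x).
Proof.
rewrite (ext_adj_new ee _ wf vG); apply/andP/idP=> [[_ /imsetP[u uN]]|zN].
  by case/set2_eq=> [[_ ->] | [evu _]] //; move: uN; rewrite -evu inE (negbTE vG).
split; last exact: imset_f.
by apply: contraNneq vG => ->; case/setIdP: zN.
Qed.

Lemma twin_adjx z : adj G' x z = adj G x z.
Proof.
rewrite (ext_adjE ee); case: (boolP ([set x; z] \in _)); last by rewrite andbF orbF.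
case/imsetP=> u uN /set2_eq[[exv _]|[exu _]]; first by move: xv'; rewrite exv eqxx.
by move: uN; rewrite -exu inE /adj eqxx /= andbF.
Qed.

Lemma twin_nbhx : nbh G' x = nbh G x.
Proof.
apply/setP=> z; rewrite !inE twin_adjx ev in_setU1.
by case xz: (adj G x z); rewrite ?andbF //; case/andP: (adj_vs wf xz) => _ ->; rewrite orbT.
Qed.

Lemma twin_nbhv : nbh G' v = nbh G x.
Proof.
apply/setP=> z; rewrite [in LHS]inE twin_adjv ev in_setU1.
by case zN: (z \in nbh G x); rewrite ?andbF //; case/setIdP: zN => ->; rewrite orbT.
Qed.

Lemma twin_degx : deg G' x = 2.
Proof. by rewrite /deg twin_nbhx; case/V2P: xV2. Qed.

Lemma twin_degv : deg G' v = 2.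
Proof. by rewrite /deg twin_nbhv; case/V2P: xV2. Qed.

Lemma twin_yv : adj G' y v.
Proof. by rewrite adj_sym twin_adjv inE yv axy. Qed.

Lemma twin_V2 : V2 G' :\ r = [set x; v].
Proof.
apply: V2D1_supergraph sub md e2 _ _ xr vr _ _.
- by apply/V2P; rewrite twin_degx ev in_setU1 xv orbT.
- by apply/V2P; rewrite twin_degv.
- by move=> z; rewrite ev in_setU1 => /orP[/eqP->|->]; rewrite ?set22.
move=> z /set2P[-> | -> _]; first by rewrite set21.
by apply: deg_sub_lt sub vG _; rewrite inE vv twin_yv.
Qed.

Lemma twin_wf : wf_graph G'.
Proof.
apply: ext_wf ev' ee wf _ => _ /imsetP[u /setIdP[uv _] ->].
by rewrite cards2 subUset !sub1set vv ev in_setU1 uv orbT (memPnC vG u uv).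
Qed.

Lemma twin_mindeg2 : mindeg2 G'.
Proof. by apply: ext_mindeg2 ev' ee md _ => z /set1P->; rewrite twin_degv. Qed.

Lemma twin_gpath_old u w t : gpath G' u w t -> v \notin u :: t -> gpath G u w t.
Proof.
move=> h vt; apply: (ext_gpath_old ee twin_new h) => a at'.
by have := gpath_vs h at'; rewrite ev in_setU1 => /orP[/eqP ea|//]; rewrite -ea at' in vt.
Qed.

Lemma twin_sub : Lmod3_sub G' x v [:: 1; 2].
Proof.
have [[[nxy _]|[_ sub01 _ _]] _ _ _] := hP; first by move: nxy; rewrite axy.
move=> _ [[|z s] [+ <-]]; first by rewrite gpath_nil (negbTE xv').
rewrite gpath_cons twin_adjx => /and4P[xz + _ hs].
have zN : z \in nbh G x by rewrite inE xz andbT; case/andP: (adj_vs wf xz).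
case/lastP: s hs => [|t w].
  by rewrite gpath_nil => /andP[/eqP ezv _]; move: zN; rewrite ezv inE (negbTE vG).
rewrite gpath_rcons => /and5P[/eqP-> ht lv vt _].
rewrite mem_cons_rcons => /norP[_ xt].
have lN : last z t \in nbh G x by rewrite -twin_adjv adj_sym.
have {}ht := twin_gpath_old ht vt.
rewrite /= size_rcons.
have [ez|nz] := eqVneq z (last z t); first by rewrite -ez in ht; rewrite (gpath_loop ht).
have -> : (size t).+2 = (size t).+1 + 1 by rewrite addn1.
apply: (modnD_mem_map (S := [:: 0; 1])); have yN : y \in nbh G x by rewrite inE yv axy.
have d2 : #|nbh G x| = 2 by case/V2P: xV2.
case: (cards2_mem_or d2 yN zN lN nz) => ey.
  apply: (Lmod3_sub_rev sub01); exists (rcons t x); rewrite size_rcons; split=> //.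
  rewrite -ey; apply: gpath_rcons_adj ht _ xt xv.
  by rewrite adj_sym; case/setIdP: lN.
apply: sub01; exists (z :: t); split=> //.
by rewrite -ey; apply: gpath_cons_adj ht xz xt xv.
Qed.

Lemma twin_swap k : Lmod3_has G r x k -> Lmod3_has (del G' x) r v k.
Proof.
move/Lmod3_has_transfer; apply; case/lastP=> [|t w]; first by rewrite gpath_nil eq_sym (negbTE xr).
rewrite gpath_rcons => /and5P[/eqP-> ht lx xt _].
exists (rcons t v); last by rewrite !size_rcons.
rewrite gpath_del mem_cons_rcons negb_or xv' xt !andbT.
apply: (gpath_rcons_new sub vG vv _ ht).
by rewrite adj_sym twin_adjv inE adj_sym lx andbT; apply: (gpath_vs ht); rewrite mem_last.
Qed.

Lemma twin_reach : root_reach r G' x v.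
Proof.
have [_ [x1 x2 _ _] _ _] := hP.
by split; [exact: Lmod3_has_sub sub _ | exact: Lmod3_has_sub sub _
          | exact: Lmod3_has_del (twin_swap _) ..].
Qed.

Lemma twin_avoid : root_reach_avoid r G' x v.
Proof.
have [_ _ /(_ axy)[/Lmod3_has_del x0 /Lmod3_has_del x2 _ _] _] := hP.
have subv := subgraph_del wf sub vG.
by split; [exact: Lmod3_has_sub subv _ | exact: Lmod3_has_sub subv _ | exact: twin_swap ..].
Qed.

Lemma twin_exc_inv : exc_inv r G'.
Proof.
have [[[nxy _]|[_ _ h0 _]] _ _ _] := hP; first by move: nxy; rewrite axy.
split; [exact: twin_wf | exact: twin_mindeg2 |].
exists x, v; split=> //; first exact: twin_V2.
split; [left | exact: twin_reach | by move=> _; exact: twin_avoid | right; exact: twin_avoid].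
split; [by rewrite twin_adjx adj_sym adj_notin | by rewrite twin_nbhx twin_nbhv
       | exact: twin_sub | exact: Lmod3_has_rcons sub vG vv twin_yv h0 |].
exists 2 => //; exists [:: y; v]; split=> //.
have xy : x != y by case/andP: axy.
rewrite !gpath_cons gpath_nil twin_adjx axy twin_yv !inE negb_or xy xv' (memPn vG y yv).
by rewrite ev !in_setU1 xv yv eqxx !orbT.
Qed.

End TwinStep.

Section CycleStep.
Variables (T : finType) (r x y a b c d : T) (G G' : graph T).
Hypotheses (wf : wf_graph G) (md : mindeg2 G) (rV2 : r \in V2 G)
  (e2 : V2 G :\ r = [set x; y]) (hP : exc_pair r G x y) (axy : adj G x y)
  (uabcd : uniq [:: a; b; c; d])
  (hn : [&& a \notin vs G, b \notin vs G, c \notin vs G & d \notin vs G])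
  (ev : vs G' = vs G :|: [set a; b; c; d])
  (ee : es G' = es G :|: [set [set a; b]; [set b; c]; [set c; d]; [set d; a];
                              [set a; x]; [set c; y]]).

Let aG : a \notin vs G. Proof. by case/and4P: hn. Qed.
Let bG : b \notin vs G. Proof. by case/and4P: hn. Qed.
Let cG : c \notin vs G. Proof. by case/and4P: hn. Qed.
Let dG : d \notin vs G. Proof. by case/and4P: hn. Qed.
Let nab : a != b. Proof. by apply: contraTneq uabcd => ->; rewrite /= !inE eqxx. Qed.
Let nac : a != c. Proof. by apply: contraTneq uabcd => ->; rewrite /= !inE eqxx /= ?orbT ?andbF. Qed.
Let nad : a != d. Proof. by apply: contraTneq uabcd => ->; rewrite /= !inE eqxx /= ?orbT ?andbF. Qed.
Let nbc : b != c. Proof. by apply: contraTneq uabcd => ->; rewrite /= !inE eqxx /= ?orbT ?andbF. Qed.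
Let nbd : b != d. Proof. by apply: contraTneq uabcd => ->; rewrite /= !inE eqxx /= ?orbT ?andbF. Qed.
Let ncd : c != d. Proof. by apply: contraTneq uabcd => ->; rewrite /= !inE eqxx /= ?orbT ?andbF. Qed.
Let rv : r \in vs G. Proof. by case/V2P: rV2. Qed.
Let xv : x \in vs G. Proof. by case: (V2D1_set2 e2) => /V2P[]. Qed.
Let yv : y \in vs G. Proof. by case: (V2D1_set2 e2) => _ /V2P[]. Qed.
Let br : b != r := memPnC bG r rv.
Let dr : d != r := memPnC dG r rv.
Let xa : x != a := memPn aG x xv.
Let xb : x != b := memPn bG x xv.
Let xc : x != c := memPn cG x xv.
Let xd : x != d := memPn dG x xv.
Let ya : y != a := memPn aG y yv.
Let yb : y != b := memPn bG y yv.
Let yc : y != c := memPn cG y yv.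
Let yd : y != d := memPn dG y yv.

Let sub : subgraph G G' := ext_subgraph ev ee.

Lemma cycle4_vs z : z \in vs G' = [|| z \in vs G, z == a, z == b, z == c | z == d].
Proof. by rewrite ev !inE !orbA. Qed.

Let av : a \in vs G'. Proof. by rewrite cycle4_vs eqxx !orbT. Qed.
Let bv : b \in vs G'. Proof. by rewrite cycle4_vs eqxx !orbT. Qed.
Let cv : c \in vs G'. Proof. by rewrite cycle4_vs eqxx !orbT. Qed.
Let dv : d \in vs G'. Proof. by rewrite cycle4_vs eqxx !orbT. Qed.

Lemma cycle4_adja z : adj G' a z -> [\/ z = b, z = d | z = x].
Proof.
rewrite (ext_adj_new ee _ wf aG) !inE !set2_eqE; neq_simpl.
by case/andP=> _ /orP[/orP[]|]/eqP->; [constructor 1 | constructor 2 | constructor 3].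
Qed.

Lemma cycle4_adjb z : adj G' b z -> z = a \/ z = c.
Proof.
rewrite (ext_adj_new ee _ wf bG) !inE !set2_eqE; neq_simpl.
by case/andP=> _ /orP[]/eqP->; [left | right].
Qed.

Lemma cycle4_adjc z : adj G' c z -> [\/ z = b, z = d | z = y].
Proof.
rewrite (ext_adj_new ee _ wf cG) !inE !set2_eqE; neq_simpl.
by case/andP=> _ /orP[/orP[]|]/eqP->; [constructor 1 | constructor 2 | constructor 3].
Qed.

Lemma cycle4_adjd z : adj G' d z -> z = a \/ z = c.
Proof.
rewrite (ext_adj_new ee _ wf dG) !inE !set2_eqE; neq_simpl.
by case/andP=> _ /orP[]/eqP->; [right | left].
Qed.

Lemma cycle4_ab : adj G' a b. Proof. by rewrite (ext_adjE ee) !inE nab eqxx /= ?orbT. Qed.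
Lemma cycle4_bc : adj G' b c. Proof. by rewrite (ext_adjE ee) !inE nbc eqxx /= ?orbT. Qed.
Lemma cycle4_cd : adj G' c d. Proof. by rewrite (ext_adjE ee) !inE ncd eqxx /= ?orbT. Qed.
Lemma cycle4_da : adj G' d a. Proof. by rewrite (ext_adjE ee) !inE eq_sym nad eqxx /= ?orbT. Qed.
Lemma cycle4_ax : adj G' a x. Proof. by rewrite (ext_adjE ee) !inE eq_sym xa eqxx /= ?orbT. Qed.
Lemma cycle4_cy : adj G' c y. Proof. by rewrite (ext_adjE ee) !inE eq_sym yc eqxx /= ?orbT. Qed.

Let xv' : x \in vs G'. Proof. by rewrite cycle4_vs xv. Qed.
Let yv' : y \in vs G'. Proof. by rewrite cycle4_vs yv. Qed.

Lemma cycle4_nbhb : nbh G' b = [set a; c].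
Proof. by apply: nbh_set2 cycle4_adjb _ cycle4_bc av cv; rewrite adj_sym cycle4_ab. Qed.

Lemma cycle4_nbhd : nbh G' d = [set a; c].
Proof. by apply: nbh_set2 cycle4_adjd cycle4_da _ av cv; rewrite adj_sym cycle4_cd. Qed.

Lemma cycle4_degb : deg G' b = 2. Proof. exact: deg_set2 nac cycle4_nbhb. Qed.
Lemma cycle4_degd : deg G' d = 2. Proof. exact: deg_set2 nac cycle4_nbhd. Qed.

Lemma cycle4_dega : 3 <= deg G' a.
Proof.
apply: (deg_ge3 (a := b) (b := d) (c := x)); rewrite ?inE ?bv ?dv ?xv' ?cycle4_ab ?cycle4_ax //.
- by rewrite /= !inE; neq_simpl.
- by rewrite adj_sym cycle4_da.
Qed.

Lemma cycle4_degc : 3 <= deg G' c.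
Proof.
apply: (deg_ge3 (a := b) (b := d) (c := y)); rewrite ?inE ?bv ?dv ?yv' ?cycle4_cd ?cycle4_cy //.
- by rewrite /= !inE; neq_simpl.
- by rewrite adj_sym cycle4_bc.
Qed.

Lemma cycle4_V2 : V2 G' :\ r = [set b; d].
Proof.
apply: V2D1_supergraph sub md e2 _ _ br dr _ _.
- by apply/V2P; rewrite bv cycle4_degb.
- by apply/V2P; rewrite dv cycle4_degd.
- move=> z; rewrite cycle4_vs => + zG; rewrite (negbTE zG) /=.
  case/or4P=> /eqP-> d2; rewrite ?set21 ?set22 //.
    by have := cycle4_dega; rewrite d2.
  by have := cycle4_degc; rewrite d2.
move=> z /set2P[]-> _.
  by apply: deg_sub_lt sub aG _; rewrite inE av adj_sym cycle4_ax.
by apply: deg_sub_lt sub cG _; rewrite inE cv adj_sym cycle4_cy.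
Qed.

Lemma cycle4_new e :
  e \in [set [set a; b]; [set b; c]; [set c; d]; [set d; a]; [set a; x]; [set c; y]] ->
  ~~ (e \subset vs G).
Proof.
rewrite !inE => /orP[/orP[/orP[/orP[/orP[]|]|]|]|]/eqP->; rewrite subUset !sub1set.
all: by rewrite ?(negbTE aG) ?(negbTE bG) ?(negbTE cG) ?(negbTE dG) ?andbF.
Qed.

Lemma cycle4_wf : wf_graph G'.
Proof.
apply: ext_wf ev ee wf _ => e; rewrite !inE => /orP[/orP[/orP[/orP[/orP[]|]|]|]|]/eqP->.
all: by rewrite cards2 subUset !sub1set ?av ?bv ?cv ?dv ?xv' ?yv'; neq_simpl.
Qed.

Lemma cycle4_mindeg2 : mindeg2 G'.
Proof.
apply: ext_mindeg2 ev ee md _ => z; rewrite !inE -!orbA => /or4P[]/eqP->.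
- exact: leq_trans cycle4_dega.
- by rewrite cycle4_degb.
- exact: leq_trans cycle4_degc.
- by rewrite cycle4_degd.
Qed.

Lemma cycle4_gpath_old u w t : gpath G' u w t ->
  a \notin u :: t -> b \notin u :: t -> c \notin u :: t -> d \notin u :: t -> gpath G u w t.
Proof.
move=> h na nb nc nd; apply: (ext_gpath_old ee cycle4_new h) => z zt.
have := gpath_vs h zt; rewrite cycle4_vs => /orP[//|/or4P[]/eqP ez];
  [move: na | move: nb | move: nc | move: nd]; by rewrite -ez zt.
Qed.

Lemma cycle4_inner t : gpath G' a c t -> b \notin a :: t -> d \notin a :: t ->
  exists2 t', gpath G x y t' & size t = (size t').+2.
Proof.
case: t => [|z t]; first by rewrite gpath_nil (negbTE nac).
rewrite gpath_cons => /and4P[/cycle4_adja[]-> at' _ ht] nb nd;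
  [by move: nb; rewrite !in_cons eqxx orbT | by move: nd; rewrite !in_cons eqxx orbT |].
move: nb nd; rewrite !(in_cons a) => /norP[_ nb] /norP[_ nd].
case/lastP: t ht at' nb nd => [|t w]; first by rewrite gpath_nil (negbTE xc).
rewrite gpath_rcons => /and5P[/eqP-> ht lc ct _].
rewrite !mem_cons_rcons => /norP[_ at'] /norP[_ nb] /norP[_ nd].
exists t; last by rewrite /= size_rcons.
move: lc; rewrite adj_sym => /cycle4_adjc[] el.
- by move: nb; rewrite -el mem_last.
- by move: nd; rewrite -el mem_last.
by rewrite el in ht; apply: cycle4_gpath_old ht at' nb ct nd.
Qed.

Lemma cycle4_sub : Lmod3_sub G' b d [:: 1; 2].
Proof.
have [[[nxy _]|[_ sub01 _ _]] _ _ _] := hP; first by move: nxy; rewrite axy.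
move=> _ [[|z s] [+ <-]]; first by rewrite gpath_nil (negbTE nbd).
rewrite gpath_cons => /and4P[/cycle4_adjb za + _ hs].
case/lastP: s hs => [|t w].
  rewrite gpath_nil => /andP[/eqP ezd _]; move: za; rewrite ezd.
  by case=> /eqP; rewrite eq_sym ?(negbTE nad) ?(negbTE ncd).
rewrite gpath_rcons => /and5P[/eqP-> ht lz dt _].
rewrite mem_cons_rcons => /norP[_ bt].
rewrite /= size_rcons.
have [ez|nz] := eqVneq z (last z t); first by rewrite -ez in ht; rewrite (gpath_loop ht).
have [t' ht' ->] : exists2 t', gpath G x y t' & size t = (size t').+2.
  move: lz; rewrite adj_sym => /cycle4_adjd el.
  case: za el nz ht bt dt => -> [] el //; rewrite ?el ?eqxx // => _ ht bt dt.
    exact: cycle4_inner ht bt dt.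
  rewrite -(size_rev_belast c); apply: cycle4_inner (gpath_rev ht) _ _;
    by rewrite -el -rev_cons_belast mem_rev.
rewrite -addn4; apply: (modnD_mem_map (S := [:: 0; 1])).
exact: sub01 _ (ex_intro _ t' (conj ht' erefl)).
Qed.

Lemma cycle4_root_x k : k < 3 -> Lmod3_has G r x k.
Proof.
have [_ _ /(_ axy)[/Lmod3_has_del x0 /Lmod3_has_del x2 y0 _] _] := hP.
case: k => [|[|[|//]]] _ //.
apply: (Lmod3_has_shift (m := 1)) y0 _ => // s; rewrite gpath_del => /andP[hs xs].
exists (rcons s x); last by rewrite size_rcons addn1.
by apply: gpath_rcons_adj hs _ xs xv; rewrite adj_sym.
Qed.

Let xa' : adj G' x a. Proof. by rewrite adj_sym cycle4_ax. Qed.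
Let ad' : adj G' a d. Proof. by rewrite adj_sym cycle4_da. Qed.

Lemma cycle4_reach : root_reach r G' b d.
Proof.
have x0 := cycle4_root_x (isT : 0 < 3); have x2 := cycle4_root_x (isT : 2 < 3).
split; [exact: Lmod3_has_rcons2 sub aG bG nab av bv xa' cycle4_ab x2
       |exact: Lmod3_has_rcons2 sub aG bG nab av bv xa' cycle4_ab x0
       |exact: Lmod3_has_rcons2 sub aG dG nad av dv xa' ad' x2
       |exact: Lmod3_has_rcons2 sub aG dG nad av dv xa' ad' x0].
Qed.

Lemma cycle4_avoid : root_reach_avoid r G' b d.
Proof.
have x0 := cycle4_root_x (isT : 0 < 3); have x1 := cycle4_root_x (isT : 1 < 3).
have subd := subgraph_del wf sub dG; have subb := subgraph_del wf sub bG.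
split; [apply: (Lmod3_has_rcons2 subd aG bG nab _ _ _ _ x1)
       |apply: (Lmod3_has_rcons2 subd aG bG nab _ _ _ _ x0)
       |apply: (Lmod3_has_rcons2 subb aG dG nad _ _ _ _ x1)
       |apply: (Lmod3_has_rcons2 subb aG dG nad _ _ _ _ x0)].
all: by rewrite ?inE ?adj_del ?av ?bv ?dv ?cycle4_ab ?xa' ?ad'; neq_simpl.
Qed.

Lemma cycle4_exc_inv : exc_inv r G'.
Proof.
have [[[nxy _]|[_ _ h0 _]] _ _ _] := hP; first by move: nxy; rewrite axy.
split; [exact: cycle4_wf | exact: cycle4_mindeg2 |].
exists b, d; split=> //; first exact: cycle4_V2.
split; [left | exact: cycle4_reach | by move=> _; exact: cycle4_avoid | right; exact: cycle4_avoid].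
split; [| by rewrite cycle4_nbhb cycle4_nbhd | exact: cycle4_sub | |].
- by apply/negP=> /cycle4_adjb[] ed; [move: nad | move: ncd]; rewrite ed eqxx.
- apply: (Lmod3_has_shift (m := 4)) h0 _ => // s hs.
  exists (a :: x :: rcons (rcons s c) d); last by rewrite /= !size_rcons addn4.
  have yc' : adj G' y c by rewrite adj_sym cycle4_cy.
  have hxd := gpath_rcons_adj (gpath_rcons_new sub cG cv yc' hs) cycle4_cd _ dv.
  apply: gpath_cons_adj (gpath_cons_adj (hxd _) cycle4_ax _ av) _ _ bv.
  + by rewrite mem_cons_rcons eq_sym (negbTE ncd) /= (gpath_notin hs dG).
  + by rewrite !mem_cons_rcons (negbTE nad) (negbTE nac) /= (gpath_notin hs aG).
  + by rewrite adj_sym cycle4_ab.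
  by rewrite in_cons eq_sym (negbTE nab) /= !mem_cons_rcons (negbTE nbd) (negbTE nbc) /= (gpath_notin hs bG).
- exists 2 => //; exists [:: a; d]; split=> //.
  by rewrite !gpath_cons gpath_nil (adj_sym G' b) cycle4_ab ad' !inE; neq_simpl; rewrite av bv dv.
Qed.

End CycleStep.

Section K23.
Variables (T : finType) (a1 a2 b1 b2 b3 : T) (G : graph T).
Hypotheses (un : uniq [:: a1; a2; b1; b2; b3]) (ev : vs G = [set a1; a2; b1; b2; b3])
  (ee : es G = [set [set a1; b1]; [set a1; b2]; [set a1; b3];
                    [set a2; b1]; [set a2; b2]; [set a2; b3]]).

Local Notation A := [set a1; a2].
Local Notation B := [set b1; b2; b3].

Let a12 : a1 != a2. Proof. by apply: contraTneq un => ->; rewrite /= !inE eqxx. Qed.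
Let a1b1 : a1 != b1. Proof. by apply: contraTneq un => ->; rewrite /= !inE eqxx /= ?orbT ?andbF. Qed.
Let a1b2 : a1 != b2. Proof. by apply: contraTneq un => ->; rewrite /= !inE eqxx /= ?orbT ?andbF. Qed.
Let a1b3 : a1 != b3. Proof. by apply: contraTneq un => ->; rewrite /= !inE eqxx /= ?orbT ?andbF. Qed.
Let a2b1 : a2 != b1. Proof. by apply: contraTneq un => ->; rewrite /= !inE eqxx /= ?orbT ?andbF. Qed.
Let a2b2 : a2 != b2. Proof. by apply: contraTneq un => ->; rewrite /= !inE eqxx /= ?orbT ?andbF. Qed.
Let a2b3 : a2 != b3. Proof. by apply: contraTneq un => ->; rewrite /= !inE eqxx /= ?orbT ?andbF. Qed.
Let b12 : b1 != b2. Proof. by apply: contraTneq un => ->; rewrite /= !inE eqxx /= ?orbT ?andbF. Qed.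
Let b13 : b1 != b3. Proof. by apply: contraTneq un => ->; rewrite /= !inE eqxx /= ?orbT ?andbF. Qed.
Let b23 : b2 != b3. Proof. by apply: contraTneq un => ->; rewrite /= !inE eqxx /= ?orbT ?andbF. Qed.

Lemma k23_vs z : (z \in vs G) = (z \in A) || (z \in B).
Proof. by rewrite ev !inE !orbA. Qed.

Lemma k23_BnA j : j \in B -> j \notin A.
Proof. by rewrite !inE => /orP[/orP[]|]/eqP->; neq_simpl. Qed.

Lemma k23_adj u w : adj G u w -> (u \in A) != (w \in A).
Proof.
move=> /andP[_]; rewrite ee !inE !set2_eqE.
by repeat case/orP; case/andP=> /eqP-> /eqP->; neq_simpl.
Qed.

Lemma k23_adjAB i j : i \in A -> j \in B -> adj G i j.
Proof.
rewrite !inE => /orP[]/eqP-> /orP[/orP[]|]/eqP->.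
all: by rewrite /adj ee !inE !set2_eqE; neq_simpl.
Qed.

Lemma k23_nbhB j : j \in B -> nbh G j = A.
Proof.
move=> jB; apply: nbh_set2; rewrite ?k23_vs ?inE ?eqxx ?orbT //.
- move=> w /k23_adj; rewrite (negbTE (k23_BnA jB)) eq_sym eqbF_neg negbK !inE.
  by case/orP=> /eqP->; [left | right].
- by rewrite adj_sym k23_adjAB ?set21.
- by rewrite adj_sym k23_adjAB ?set22.
Qed.

Lemma k23_degB j : j \in B -> deg G j = 2.
Proof. by move/k23_nbhB/(deg_set2 a12). Qed.

Lemma k23_degA i : i \in A -> 3 <= deg G i.
Proof.
move=> iA; apply: (deg_ge3 (a := b1) (b := b2) (c := b3)); first by rewrite /= !inE; neq_simpl.
all: by rewrite inE k23_vs k23_adjAB // !inE eqxx /= ?orbT.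
Qed.

Lemma k23_V2 : V2 G = B.
Proof.
apply/setP=> z; apply/V2P/idP=> [[]|zB]; last by rewrite k23_degB // k23_vs zB orbT.
rewrite k23_vs => /orP[zA|//] d2.
by have := k23_degA zA; rewrite d2.
Qed.

Lemma k23_wf : wf_graph G.
Proof.
move=> e; rewrite ee !inE => /orP[/orP[/orP[/orP[/orP[]|]|]|]|]/eqP->.
all: by rewrite cards2 subUset !sub1set !k23_vs !inE; neq_simpl.
Qed.

Lemma k23_mindeg2 : mindeg2 G.
Proof.
move=> z; rewrite k23_vs => /orP[/k23_degA|/k23_degB->] //.
exact: leq_trans.
Qed.

Lemma k23_parity u s : path (adj G) u s ->
  (last u s \in A) = (u \in A) (+) odd (size s).
Proof.
elim: s u => [|z s IH] u /=; first by rewrite addbF.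
case/andP=> /k23_adj uz /IH ->.
by move: uz; case: (u \in A); case: (z \in A); case: (odd _).
Qed.

Lemma k23_sub x y : x \in B -> y \in B -> x != y -> Lmod3_sub G x y [:: 1; 2].
Proof.
move=> xB yB xy _ [s [hs <-]].
have /and4P[p /eqP l us _] := hs.
have := k23_parity p; rewrite l (negbTE (k23_BnA xB)) (negbTE (k23_BnA yB)) /= => even_s.
have s_gt0 : 0 < size s by case: s l {hs p us even_s} => //= el; rewrite el eqxx in xy.
have s_le4 : size s < 5.
  by apply: (uniq_leq_size (s2 := [:: a1; a2; b1; b2; b3])) us _ => z /(gpath_vs hs); rewrite ev !inE -!orbA.
by move: s_gt0 s_le4 even_s; case: (size s) => [|[|[|[|[|]]]]].
Qed.

Lemma k23_has2 x y : x \in B -> y \in B -> x != y -> Lmod3_has G x y 2.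
Proof.
move=> xB yB xy; exists 2 => //; exists [:: a1; y]; split=> //.
rewrite !gpath_cons gpath_nil adj_sym !k23_adjAB ?set21 // !inE !k23_vs xB yB set21 !orbT.
have xa1 : x != a1 := memPnC (k23_BnA xB) a1 (set21 a1 a2).
have a1y : a1 != y := memPn (k23_BnA yB) a1 (set21 a1 a2).
by rewrite negb_or xa1 xy a1y eqxx.
Qed.

Lemma k23_has1 x y o :
  x \in B -> y \in B -> o \in B -> uniq [:: x; y; o] -> Lmod3_has G x y 1.
Proof.
move=> xB yB oB; rewrite /= !inE !negb_or => /and3P[/andP[xy xo] yo _].
have a1A : a1 \in A := set21 a1 a2; have a2A : a2 \in A := set22 a1 a2.
have xa1 := memPnC (k23_BnA xB) a1 a1A; have xa2 := memPnC (k23_BnA xB) a2 a2A.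
have ya1 := memPnC (k23_BnA yB) a1 a1A; have ya2 := memPnC (k23_BnA yB) a2 a2A.
have oa1 := memPnC (k23_BnA oB) a1 a1A; have oa2 := memPnC (k23_BnA oB) a2 a2A.
have e1 : adj G x a1 by rewrite adj_sym k23_adjAB.
have e2 : adj G o a2 by rewrite adj_sym k23_adjAB.
exists 4 => //; exists [:: a1; o; a2; y]; split=> //.
rewrite !gpath_cons gpath_nil e1 e2 !k23_adjAB // !k23_vs xB yB oB a1A a2A !orbT !inE.
by neq_simpl.
Qed.

Lemma k23_exc_inv r : r \in V2 G -> exc_inv r G.
Proof.
rewrite k23_V2 => rB.
have [x [y [urxy eB]]] : exists x y, uniq [:: r; x; y] /\ [set r; x; y] = B.
  move: rB; rewrite !inE => /orP[/orP[]|]/eqP->.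
  - by exists b2, b3; rewrite /= !inE; neq_simpl.
  - by exists b1, b3; rewrite (setUC [set b2]) /= !inE; neq_simpl.
  - by exists b1, b2; rewrite (setUC [set b3]) setUAC /= !inE; neq_simpl.
have xB : x \in B by rewrite -eB !inE eqxx orbT.
have yB : y \in B by rewrite -eB !inE eqxx !orbT.
move: urxy; rewrite /= !inE !negb_or => /and3P[/andP[rx ry] xy _].
split; [exact: k23_wf | exact: k23_mindeg2 |].
exists x, y; split=> //.
  by rewrite k23_V2 -eB -setUA setU1K // !inE negb_or rx ry.
have nxy : ~~ adj G x y.
  by apply/negP=> /k23_adj; rewrite (negbTE (k23_BnA xB)) (negbTE (k23_BnA yB)).
split; last by left; exists a1, a2, b1, b2, b3.
- left; split=> //; first by rewrite !k23_nbhB.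
  + exact: k23_sub.
  + by apply: (k23_has1 (o := r)) => //=; rewrite !inE; neq_simpl.
  + exact: k23_has2.
- split; [apply: (k23_has1 (o := y)) | apply: k23_has2
         |apply: (k23_has1 (o := x)) | apply: k23_has2] => //.
  + by rewrite /= !inE; neq_simpl.
  + by rewrite /= !inE; neq_simpl.
- by move=> axy; rewrite axy in nxy.
Qed.

End K23.

Lemma isK23_exc_inv (T : finType) (r : T) (G : graph T) :
  isK23 G -> r \in V2 G -> exc_inv r G.
Proof. by case=> [a1 [a2 [b1 [b2 [b3 [un ev ee]]]]]]; exact: (k23_exc_inv un ev ee). Qed.

Lemma exc_inv_step (T : finType) (r x y : T) (G G' : graph T) :
  exc_inv r G -> ext_step r G x y G' -> exc_inv r G'.
Proof.
move=> inv [urxy rV2 xV2 yV2 hstep]; have [wf md [p [q [_ e2 _]]]] := inv.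
move: urxy; rewrite /= !inE !negb_or => /and3P[/andP[rx ry] xy _].
have exy : V2 G :\ r = [set x; y].
  apply/eqP; rewrite eq_sym eqEcard subUset !sub1set !in_setD1 xV2 yV2.
  by rewrite !(eq_sym _ r) rx ry e2 !cards2 xy; case: (p != q).
have hP := exc_inv_pair inv xy exy.
case: hstep => [[nxy [p' [q' [upq pG qG ev ee]]]]
               |[axy [[v [w [vG /[!inE]/orP[]/eqP-> ev ee]]]|[a [b [c [d [uabcd hn ev ee]]]]]]]].
- by apply: path3_exc_inv wf md rV2 exy hP nxy _ pG qG ev ee; rewrite /= inE andbT in upq.
- exact: twin_exc_inv wf md rV2 exy hP axy vG ev ee.
- apply: twin_exc_inv wf md rV2 _ (exc_pair_sym hP) _ vG ev ee; first by rewrite setUC.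
  by rewrite adj_sym.
- exact: cycle4_exc_inv wf md rV2 exy hP axy uabcd hn ev ee.
Qed.

Lemma exc_exc_inv (T : finType) (r : T) (G : graph T) : exc r G -> exc_inv r G.
Proof. by elim=> [G0 /isK23_exc_inv|G0 x y G1 _ /exc_inv_step]; apply. Qed.

Theorem lemma3p2 (T : finType) (G : graph T) (r x y : T) :
  exceptional G r ->
  x != y -> V2 G :\ r = [set x; y] ->
  ( (~~ adj G x y /\ nbh G x = nbh G y /\
       equiv_mod (Lset G x y) (natset [:: 1; 2]) 3)
    \/
    (adj G x y /\ equiv_mod (Lset G x y) (natset [:: 0; 1]) 3) )
  /\
  (~ isK23 G ->
     subset_mod (natset [:: 0; 2]) (Lset (del G y) r x) 3 /\
     subset_mod (natset [:: 0; 2]) (Lset (del G x) r y) 3).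
Proof.
move=> [/exc_exc_inv inv _] xy e2.
have [hA _ _ hK] := exc_inv_pair inv xy e2.
have mem2 (P : nat -> Prop) k1 k2 : P k1 -> P k2 -> forall k, k \in [:: k1; k2] -> P k.
  by move=> h1 h2 k; rewrite !inE => /orP[]/eqP->.
split.
  case: hA => [[nxy en sub h1 h2]|[axy sub h0 h1]].
    by left; do 2!split=> //; apply: natset_equiv_mod sub (mem2 _ _ _ h1 h2).
  by right; split=> //; apply: natset_equiv_mod sub (mem2 _ _ _ h0 h1).
by move=> nK; case: hK => // -[x0 x2 y0 y2]; split; apply: natset_subset_mod; apply: mem2.
Qed.
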